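(* Let $n\ge 3$ and $S_n$ be as defined below. Then $S_n$ is cancellative and it has a group of fractions $G$ equal to the central localization $S_n\langle a_1a_2\cdots a_n\rangle^{-1}$. Moreover $G\cong F\times C$, where $F=\operatorname{gr}(a_1,\dots,a_{n-1})\subseteq G$ is a free group of rank $n-1$ and $C=\operatorname{gr}(a_1a_2\cdots a_n)\subseteq G$ is an infinite cyclic group.
   Context: For $n\ge 3$, $S_n$ denotes the monoid with generators $a_1,\dots,a_n$ and defining relations $a_1a_2\cdots a_n=a_{\sigma(1)}a_{\sigma(2)}\cdots a_{\sigma(n)}$ for all $\sigma$ in the cyclic subgroup of $\operatorname{Sym}_n$ generated by the cycle $(1,2,\dots,n)$. $\operatorname{gr}(b_1,\dots,b_m)$ denotes the subgroup generated by $b_1,\dots,b_m$, and $\langle z\rangle$ denotes the submonoid generated by $z$. *)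

From mathcomp Require Import all_boot.
Set Implicit Arguments. Unset Strict Implicit. Unset Printing Implicit Defensive.

(** * The monoid S_n, presented by words over the alphabet 'I_n.
    Letter i : 'I_n stands for the generator a_(i+1). *)

Definition zword (n : nat) : seq 'I_n := enum 'I_n.

(** The defining relations: a_1...a_n = a_{σ(1)}...a_{σ(n)} for σ = (1 2 ... n)^k,
    i.e. the word a_1...a_n equals each of its cyclic rotations [rot k]. *)
Inductive cong (n : nat) : seq 'I_n -> seq 'I_n -> Prop :=
| cong_rel : forall (u v : seq 'I_n) (k : nat),
    cong (u ++ rot k (zword n) ++ v) (u ++ zword n ++ v)
| cong_refl : forall u, cong u u
| cong_sym : forall u v, cong u v -> cong v u
| cong_trans : forall u v w, cong u v -> cong v w -> cong u w.

Record Grp := {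
  gcar :> Type;
  gmul : gcar -> gcar -> gcar;
  gone : gcar;
  ginv : gcar -> gcar;
  gmulA : forall x y z, gmul x (gmul y z) = gmul (gmul x y) z;
  gmul1 : forall x, gmul gone x = x;
  gmulV : forall x, gmul (ginv x) x = gone
}.

Arguments gmul {g}.
Arguments gone {g}.
Arguments ginv {g}.

Fixpoint gpow (G : Grp) (x : G) (m : nat) : G :=
  if m is m'.+1 then gmul x (gpow x m') else gone.

(** Evaluation of a signed word ((i, true) = b_i^{-1}, (i, false) = b_i). *)
Definition geval (G : Grp) (I : Type) (b : I -> G) (s : seq (I * bool)) : G :=
  foldr (fun p acc => gmul (if p.2 then ginv (b p.1) else b p.1) acc) gone s.

Fixpoint reduced (I : eqType) (s : seq (I * bool)) : bool :=
  match s with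
  | x :: ((y :: _) as t) => ~~ ((x.1 == y.1) && (x.2 != y.2)) && reduced t
  | _ => true
  end.

Definition gen_sub (G : Grp) (I : Type) (b : I -> G) (g : G) : Prop :=
  exists s : seq (I * bool), g = geval b s.

Definition free_of_rank (G : Grp) (F : G -> Prop) (r : nat) : Prop :=
  exists b : 'I_r -> G,
    (forall i, F (b i)) /\
    (forall g, F g -> gen_sub b g) /\
    (forall s : seq ('I_r * bool), reduced s -> geval b s = gone -> s = [::]).

Definition cyc_sub (G : Grp) (x : G) (g : G) : Prop :=
  exists m : nat, g = gpow x m \/ g = ginv (gpow x m).

Definition gensF (n : nat) : 'I_n.-1 -> seq 'I_n :=
  fun i => [:: widen_ord (leq_pred n) i].

From mathcomp Require Import all_boot.
From Stdlib Require Import ZArith Lia.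
Set Implicit Arguments. Unset Strict Implicit. Unset Printing Implicit Defensive.

(** Write n = n'.+1, z = a_1 ... a_n, and let F be the free group on
    b_1, ..., b_(n-1).  The group of fractions is modelled concretely as
    G := F x Z (reduced signed words paired with an integer), and the letters
    are sent to  a_i |-> b_i  for i < n  and  a_n |-> (b_1 ... b_(n-1))^-1 t,
    t the generator of Z.  Then z |-> t is central, so every cyclic rotation
    of z (a conjugate of z) also maps to t: this defines a monoid morphism
    emb : S_n -> G, and the statements about F, C = <t> and fractions are
    direct computations in F x Z.

    The heart of the proof is the injectivity of emb, proved with normal
    forms: pairs (w, k), read w z^k, where the word w contains no cyclic
    rotation of z as a factor.  Left multiplication by a letter acts on normal
    forms (nf_cons: prepend, and cancel a rotation of z if one appears); the
    letters a_i, i < n, act invertibly, and the whole word z acts by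
    k |-> k + 1.  Hence G acts on normal forms, the orbit of ([::], 0) under
    emb u is the normal form of u, and equal images force congruent words.
    Cancellativity of S_n then follows from cancellation in G.

    Nothing in the argument needs n >= 3: it works for every n >= 1. *)

Section GroupFacts.
Variable G : Grp.
Implicit Types x y : G.

Lemma gmulVr x : gmul x (ginv x) = gone.
Proof.
have -> : gmul x (ginv x) = gmul (gmul (ginv (ginv x)) (ginv x)) (gmul x (ginv x)).
  by rewrite gmulV gmul1.
by rewrite -gmulA (gmulA (ginv x) x) gmulV gmul1 gmulV.
Qed.

Lemma gmul1r x : gmul x gone = x.
Proof. by rewrite -(gmulV x) gmulA gmulVr gmul1. Qed.

Lemma gmulKl x y : gmul (ginv x) (gmul x y) = y.
Proof. by rewrite gmulA gmulV gmul1. Qed.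

Lemma gmul_cancel_l x y y' : gmul x y = gmul x y' -> y = y'.
Proof. by move=> h; rewrite -(gmulKl x y) h gmulKl. Qed.

Lemma gmul_cancel_r x x' y : gmul x y = gmul x' y -> x = x'.
Proof.
by move=> h; rewrite -(gmul1r x) -(gmulVr y) gmulA h -gmulA gmulVr gmul1r.
Qed.

Lemma geval_cons (I : Type) (b : I -> G) p s :
  geval b (p :: s) = gmul (if p.2 then ginv (b p.1) else b p.1) (geval b s).
Proof. by []. Qed.

End GroupFacts.

Lemma split_at_mismatch (A : eqType) (t s : seq A) : ~~ prefix t s ->
  exists2 p, p < size t &
    exists s', s = take p t ++ s' /\ ohead s' != ohead (drop p t).
Proof.
elim: t s => [|c t IH] s; first by rewrite prefix0s.
case: (eqVneq (ohead s) (Some c)) => [|hs _]; last by exists 0 => //; exists s.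
case: s => //= d s [->]; rewrite eqxx /= => /IH [p hp [s' [-> hs']]].
by exists p.+1 => //; exists s'.
Qed.

Lemma prefix_mismatch (A : eqType) (s t w : seq A) (c : A) :
  ohead w != Some c -> ~~ prefix (s ++ c :: t) (s ++ w).
Proof.
rewrite prefix_catr // eqxx /=.
by case: w => //= d w hd; case: eqP => //= cd; rewrite cd eqxx in hd.
Qed.

Section NormalForms.
Variable n' : nat.
Local Notation n := n'.+1.
Local Notation T := 'I_n.
Local Notation z := (zword n).

(** Letter x : 'I_n is a_(x+1); the rotation of z starting at letter x is
    rot x z = x :: rest x, where rest x = a_(x+2) ... a_n a_1 ... a_x.
    In S_n, x (rest x) = z, so rest x plays the role of x^-1 z. *)
Lemma size_z : size z = n.
Proof. exact: size_enum_ord. Qed.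

Lemma drop_z (j : T) : drop j z = j :: drop j.+1 z.
Proof. by rewrite (drop_nth j) ?size_z // nth_ord_enum. Qed.

Definition rest (x : T) : seq T := drop x.+1 z ++ take x z.

Lemma rotz_cons (x : T) : rot x z = x :: rest x.
Proof. by rewrite /rot drop_z. Qed.

Lemma size_rest x : size (rest x) = n'.
Proof. by have := size_rot x z; rewrite rotz_cons size_z => -[]. Qed.

Lemma rot_rotz (x : T) k : exists y : T, rot k (rot x z) = rot y z.
Proof.
rewrite rot_rot_add; set r := rot_add _ _ _.
have : r <= n by rewrite -[X in _ <= X]size_z leq_rot_add.
rewrite leq_eqVlt => /orP [/eqP e | h]; last by exists (Ordinal h).
by exists ord0; rewrite e rot_oversize ?size_z // rot0.
Qed.

Lemma rot_rotz_cons (x : T) k a t : rot k (rot x z) = a :: t -> t = rest a.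
Proof. by have [y ->] := rot_rotz x k; rewrite rotz_cons => -[<- <-]. Qed.

(** [zfree w]: no factor of w is a cyclic rotation of z (at each position, the
    letter a is not followed by rest a). *)
Fixpoint zfree (w : seq T) : bool :=
  if w is a :: w' then ~~ prefix (rest a) w' && zfree w' else true.

(** Left multiplication of the normal form (w, k) by the letter x, and by its
    inverse x^-1 = (rest x) z^-1. *)
Definition nf_cons (x : T) (t : seq T * Z) : seq T * Z :=
  let: (w, k) := t in
  if prefix (rest x) w then (drop n' w, (k + 1)%Z) else (x :: w, k).

Definition nf_uncons (x : T) (t : seq T * Z) : seq T * Z :=
  let: (w, k) := t in
  if ohead w == Some x then (behead w, k) else (rest x ++ w, (k - 1)%Z).

Lemma zfree_drop k w : zfree w -> zfree (drop k w).
Proof. by elim: w k => [|a w IH] [|k] //= /andP [_ /IH]. Qed.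

Lemma zfree_nf_cons x t : zfree t.1 -> zfree (nf_cons x t).1.
Proof. by case: t => w k /= hw; case: ifPn => /= [_ | ->]; [exact: zfree_drop | ]. Qed.

(** Prepending rest x to a z-free word not starting with x creates no rotation
    of z: such a rotation would have to continue rest x with the letter x. *)
Lemma zfree_rest_cat (x : T) w :
  zfree w -> ohead w != Some x -> zfree (rest x ++ w).
Proof.
move=> hw hx; rewrite -[rest x]drop0.
suff : forall s j, s = drop j (rest x) -> zfree (s ++ w) by apply.
elim=> [|a s IH] j // ha; rewrite cat_cons /=; apply/andP; split; last first.
  by apply: (IH j.+1); rewrite -[j.+1]add1n -drop_drop -ha drop1.
have hj : j < size (rest x).
  by rewrite ltnNge; apply/negP => /drop_oversize hd; rewrite hd in ha.
have erot : rot j.+1 (rot x z) = a :: s ++ x :: take j (rest x).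
  have ex : x :: rest x = (x :: take j (rest x)) ++ a :: s.
    by rewrite ha cat_cons cat_take_drop.
  have hs : size (x :: take j (rest x)) = j.+1 by rewrite /= size_takel // ltnW.
  by rewrite rotz_cons ex -hs rot_size_cat.
by rewrite -(rot_rotz_cons erot) prefix_mismatch.
Qed.

Lemma zfree_nf_uncons x t : zfree t.1 -> zfree (nf_uncons x t).1.
Proof.
case: t => w k /= hw; case: ifPn => /= [_ | hx]; last exact: zfree_rest_cat.
by case: w hw {k} => //= a w /andP [].
Qed.

Lemma nf_cons_uncons x t : zfree t.1 -> nf_cons x (nf_uncons x t) = t.
Proof.
case: t => w k /= hw; case: ifPn => [|_].
  by case: w hw => //= a w /andP [hw _] /eqP [<-]; rewrite (negbTE hw).
by rewrite /= prefix_prefix drop_size_cat ?size_rest //; congr pair; lia.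
Qed.

Lemma nf_uncons_cons x t : zfree t.1 -> nf_uncons x (nf_cons x t) = t.
Proof.
case: t => w k /= hw; case: ifPn => [/prefixP [w2 ew] | _]; last by rewrite /= eqxx.
rewrite ew drop_size_cat ?size_rest //=; case: ifPn => [hx | _]; last first.
  by congr pair; lia.
(* otherwise w = rest x ++ x :: w3 starts with the rotation rest x ++ [:: x] *)
exfalso; case: w2 ew hx => //= b w3 ew /eqP [eb]; subst b.
have : rot 1 (rot x z) = rest x ++ [:: x] by rewrite rotz_cons rot1_cons cats1.
case: (rest x) ew => [|a t] ew /= /rot_rotz_cons ea.
  by move: hw; rewrite ew /= -ea prefix0s.
by move: hw; rewrite ew /= -ea -[x :: w3]cat1s catA prefix_prefix.
Qed.

Lemma take_z (p : T) j : p < j -> exists t, take j z = take p z ++ p :: t.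
Proof.
move=> hpj; case e: (j - p) => [|m]; first by move: hpj; rewrite -subn_gt0 e.
exists (take m (drop p.+1 z)).
by rewrite -(subnKC (ltnW hpj)) e takeD drop_z.
Qed.

Lemma size_take_z (p : T) : size (take p z) = p.
Proof. by rewrite size_takel // size_z ltnW. Qed.

Lemma drop_take_z j (p : T) : j <= p -> drop j z = drop j (take p z) ++ drop p z.
Proof.
rewrite leq_eqVlt => /orP [/eqP -> | hj]; last first.
  by rewrite -{1}(cat_take_drop p z) drop_cat size_take_z hj.
by rewrite [drop p (take p z)]drop_oversize ?size_take_z.
Qed.

Lemma drop_take_z_cons (j p : T) :
  j < p -> drop j (take p z) = j :: drop j.+1 (take p z).
Proof. by move=> hj; rewrite (drop_nth j) ?size_take_z // nth_take // nth_ord_enum. Qed.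

(** Multiplying a normal form w = a_1 ... a_p w' (with w' not starting with
    a_(p+1)) by z letter by letter from the right: after the letters
    a_(j+1) ... a_n, the word is a_(j+1) ... a_n w as long as j > p, the
    rotation a_(p+1) ... a_n a_1 ... a_p cancels at j = p, and afterwards the
    word is a_(j+1) ... a_p w' with one more power of z. *)
Section MultiplicationByZ.
Variables (p : T) (w' : seq T) (k : Z).
Hypothesis mismatch : ohead w' != Some p.

Definition z_stage (j : nat) : seq T * Z :=
  if p < j then (drop j z ++ take p z ++ w', k)
  else (drop j (take p z) ++ w', (k + 1)%Z).

Lemma nf_cons_z_stage (j : T) : nf_cons j (z_stage j.+1) = z_stage j.
Proof.
rewrite /z_stage ltnS; case: (ltngtP p j) => [hpj | hjp | epj].
- have [t et] := take_z hpj.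
  by rewrite /= /rest et !catA ifN ?prefix_mismatch // drop_z.
- rewrite /= /rest (drop_take_z hjp) drop_z -catA ifN ?prefix_mismatch //.
  by rewrite (drop_take_z_cons hjp).
- have -> : p = j by apply: val_inj.
  rewrite /= catA -/(rest j) prefix_prefix drop_size_cat ?size_rest //.
  by rewrite drop_oversize ?size_take_z.
Qed.

Lemma nf_fold_z_stage j :
  j <= n -> foldr nf_cons (z_stage n) (drop j z) = z_stage j.
Proof.
move=> hj; rewrite -(subKn hj); elim: (n - j) (leq_subr j n) => [|d IH] hd.
  by rewrite subn0 drop_oversize ?size_z.
have eJ : (n - d.+1).+1 = n - d by rewrite -subSn.
have hJ : n - d.+1 < n by rewrite eJ leq_subr.
have := IH (ltnW hd); rewrite -eJ => IH'.
by rewrite (drop_z (Ordinal hJ)) [foldr _ _ _]/= IH' nf_cons_z_stage.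
Qed.

End MultiplicationByZ.

Lemma zfree_not_prefix_z w : zfree w -> ~~ prefix z w.
Proof.
have ez : z = ord0 :: rest ord0 by rewrite -rotz_cons rot0.
case: w => [|a w]; rewrite ez // prefix_cons => /andP [hw _].
by case: eqP => //= ea; rewrite ea.
Qed.

Lemma nf_fold_z w k : zfree w -> foldr nf_cons (w, k) z = (w, (k + 1)%Z).
Proof.
move=> /zfree_not_prefix_z /split_at_mismatch; rewrite size_z.
move=> [p hp [w' [-> hw']]]; rewrite (drop_z (Ordinal hp)) in hw'.
have := nf_fold_z_stage k hw' (leq0n n).
by rewrite /z_stage ltn_ord ltn0 !drop0 [drop n z]drop_oversize ?size_z.
Qed.

Lemma cong_ctx p q (v v' : seq T) : cong v v' -> cong (p ++ v ++ q) (p ++ v' ++ q).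
Proof.
elim=> {v v'} [u v k | u | u v _ IH | u v w _ IH1 _ IH2].
- by have := cong_rel (p ++ u) (v ++ q) k; rewrite !catA.
- exact: cong_refl.
- exact: cong_sym.
- exact: cong_trans IH2.
Qed.

Lemma cong_cons x (v v' : seq T) : cong v v' -> cong (x :: v) (x :: v').
Proof. by move/(cong_ctx [:: x] [::]); rewrite !cats0. Qed.

Lemma cong_catr (v v' q : seq T) : cong v v' -> cong (v ++ q) (v' ++ q).
Proof. exact: (cong_ctx [::] q). Qed.

Lemma cong_rotz k : cong (rot k z) z.
Proof. by have := cong_rel (n := n) [::] [::] k; rewrite /= !cats0. Qed.

Lemma cong_z_letter (a : T) : cong (z ++ [:: a]) (a :: z).
Proof.
have [y ey] := rot_rotz a 1.
move: ey; rewrite {1}rotz_cons rot1_cons -cats1 => ey.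
apply: cong_sym; apply: cong_trans (cong_cons a (cong_sym (cong_rotz y))) _.
by rewrite -ey -cat_cons -rotz_cons; apply: cong_catr; apply: cong_rotz.
Qed.

Lemma cong_z_central v : cong (z ++ v) (v ++ z).
Proof.
elim: v => [|a v IH]; first by rewrite cats0; apply: cong_refl.
rewrite -cat1s catA; apply: cong_trans (cong_catr v (cong_z_letter a)) _.
exact: cong_cons.
Qed.

Definition zpow k : seq T := flatten (nseq k z).

Definition nf (u : seq T) : seq T * Z := foldr nf_cons ([::], 0%Z) u.

Lemma nf_spec u : exists w k,
  [/\ nf u = (w, Z.of_nat k), zfree w & cong u (w ++ zpow k)].
Proof.
elim: u => [|x u IH]; first by exists [::], 0; split=> //; apply: cong_refl.
have [w [k [ew0 hw hc]]] := IH.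
rewrite /nf /= -/(nf u) ew0 /=; case: ifPn => [/prefixP [w2 ew] | hx].
  exists w2, k.+1; split.
  - by rewrite ew drop_size_cat ?size_rest //; congr pair; lia.
  - by move: hw; rewrite ew => /(zfree_drop n'); rewrite drop_size_cat ?size_rest.
  apply: cong_trans (cong_cons x hc) _; rewrite ew -catA -cat_cons -rotz_cons.
  apply: cong_trans (cong_catr (w2 ++ zpow k) (cong_rotz x)) _.
  by rewrite /zpow /= !catA; apply: cong_catr; apply: cong_z_central.
by exists (x :: w), k; split=> //=; [rewrite hx | apply: cong_cons].
Qed.

End NormalForms.

Arguments zfree {n'}.
Arguments nf_cons {n'}.
Arguments nf_uncons {n'}.
Arguments nf {n'}.

(** The free group on I is realised on reduced signed words ((i, true) is the
    inverse of (i, false)); red_cons multiplies a reduced word on the left by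
    a letter, cancelling when possible. *)
Section FreeGroupTimesZ.
Variable I : eqType.
Local Notation letter := (I * bool)%type.
Implicit Types (l x y : letter) (s t : seq letter).

Definition letter_inv l : letter := (l.1, ~~ l.2).

Lemma letter_invK l : letter_inv (letter_inv l) = l.
Proof. by case: l => i b; rewrite /letter_inv negbK. Qed.

Lemma cancelsE x y : (x.1 == y.1) && (x.2 != y.2) = (y == letter_inv x).
Proof.
case: x y => [i b] [j c]; rewrite /letter_inv xpair_eqE /= eq_sym.
by case: b; case: c.
Qed.

Lemma reduced_cons2 x y t :
  reduced [:: x, y & t] = (y != letter_inv x) && reduced (y :: t).
Proof. by rewrite /= cancelsE. Qed.

Lemma reduced_behead l s : reduced (l :: s) -> reduced s.
Proof. by case: s => // y s; rewrite reduced_cons2 => /andP []. Qed.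

Definition red_cons l s : seq letter :=
  if s is y :: s' then (if y == letter_inv l then s' else l :: s) else [:: l].

Definition red_cat s t : seq letter := foldr red_cons t s.

Lemma reduced_red_cons l s : reduced s -> reduced (red_cons l s).
Proof.
case: s => // y s /= hs; case: ifPn => [_ | hy]; first exact: reduced_behead hs.
by rewrite reduced_cons2 hy.
Qed.

Lemma reduced_red_cat s t : reduced t -> reduced (red_cat s t).
Proof. by elim: s => //= l s IH /IH; apply: reduced_red_cons. Qed.

Lemma red_cons_id l s : reduced (l :: s) -> red_cons l s = l :: s.
Proof. by case: s => // y s; rewrite reduced_cons2 /= => /andP [/negbTE ->]. Qed.

Lemma red_consK l s : reduced s -> red_cons (letter_inv l) (red_cons l s) = s.
Proof.
case: s => [_ | y s hs]; first by rewrite /red_cons letter_invK eqxx.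
rewrite {2}/red_cons; case: ifPn => [/eqP <- | _]; first exact: red_cons_id.
by rewrite /red_cons letter_invK eqxx.
Qed.

Lemma red_cat_red_cons x t u : reduced t -> reduced u ->
  red_cat (red_cons x t) u = red_cons x (red_cat t u).
Proof.
case: t => [|y t] //= ht hu; case: ifPn => [/eqP ey | //].
by rewrite -[x]letter_invK -ey red_consK // reduced_red_cat // (reduced_behead ht).
Qed.

Lemma red_catA s t u : reduced t -> reduced u ->
  red_cat (red_cat s t) u = red_cat s (red_cat t u).
Proof.
by move=> ht hu; elim: s => //= x s IH; rewrite red_cat_red_cons ?reduced_red_cat // IH.
Qed.

Lemma red_cats0 s : reduced s -> red_cat s [::] = s.
Proof. by elim: s => //= l s IH hs; rewrite IH ?(reduced_behead hs) // red_cons_id. Qed.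

Definition red_inv s : seq letter := red_cat (rev (map letter_inv s)) [::].

Lemma red_catVs s : reduced s -> red_cat (red_inv s) s = [::].
Proof.
move=> hs; rewrite /red_inv red_catA //; elim: s hs => //= l s IH hs.
rewrite rev_cons /red_cat foldr_rcons -/(red_cat _ _) /= letter_invK eqxx.
exact: IH (reduced_behead hs).
Qed.

Definition FZcar := ({s : seq letter | reduced s} * Z)%type.

Definition fz_mul (a b : FZcar) : FZcar :=
  (exist _ (red_cat (val a.1) (val b.1)) (reduced_red_cat _ (valP b.1)), (a.2 + b.2)%Z).
Definition fz_one : FZcar := (exist _ [::] isT, 0%Z).
Definition fz_inv (a : FZcar) : FZcar :=
  (exist _ (red_inv (val a.1)) (reduced_red_cat _ (isT : reduced [::])), (- a.2)%Z).

Lemma fz_eq (a b : FZcar) : val a.1 = val b.1 -> a.2 = b.2 -> a = b.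
Proof. by case: a b => [a1 a2] [b1 b2] /= /val_inj -> ->. Qed.

Lemma fz_mulA a b c : fz_mul a (fz_mul b c) = fz_mul (fz_mul a b) c.
Proof. apply: fz_eq => /=; [by rewrite red_catA ?(valP _) | lia]. Qed.

Lemma fz_mul1 a : fz_mul fz_one a = a.
Proof. exact: fz_eq. Qed.

Lemma fz_mulV a : fz_mul (fz_inv a) a = fz_one.
Proof. apply: fz_eq => /=; [exact/red_catVs/valP | lia]. Qed.

Definition FZ : Grp := Build_Grp fz_mulA fz_mul1 fz_mulV.

End FreeGroupTimesZ.

Section Model.
Variable n' : nat.
Local Notation n := n'.+1.
Local Notation T := 'I_n.
Local Notation z := (zword n).
Local Notation G := (FZ 'I_n').

Definition basis (i : 'I_n') : G := (exist _ [:: (i, false)] isT, 0%Z).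
Definition zelt (k : Z) : G := (exist _ [::] isT, k).
Definition zgen : G := zelt 1.
Definition wid (i : 'I_n') : T := widen_ord (leqnSn n') i.
Definition basis_prod (s : seq 'I_n') : G := foldr (fun i g => gmul (basis i) g) gone s.

Definition letter_img (x : T) : G :=
  if unlift ord_max x is Some i then basis i
  else gmul (ginv (basis_prod (enum 'I_n'))) zgen.

Definition emb (u : seq T) : G := foldr (fun x g => gmul (letter_img x) g) gone u.

Lemma letter_img_wid i : letter_img (wid i) = basis i.
Proof.
have -> : wid i = lift ord_max i by apply: ord_inj; rewrite lift_max.
by rewrite /letter_img liftK.
Qed.

Lemma emb_nil : emb [::] = gone.
Proof. by []. Qed.

Lemma emb_cons x u : emb (x :: u) = gmul (letter_img x) (emb u).
Proof. by []. Qed.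

Lemma emb_cat u v : emb (u ++ v) = gmul (emb u) (emb v).
Proof.
by elim: u => [|x u IH]; [rewrite gmul1 | rewrite cat_cons !emb_cons IH gmulA].
Qed.

Lemma emb_map_wid s : emb (map wid s) = basis_prod s.
Proof. by elim: s => [|i s IH] //; rewrite map_cons emb_cons IH letter_img_wid. Qed.

Lemma emb_z : emb z = zgen.
Proof.
rewrite /zword enum_ordSr -cats1 emb_cat emb_map_wid emb_cons /letter_img unlift_none.
by rewrite emb_nil gmul1r gmulA gmulVr gmul1.
Qed.

(** Elements of Z are central, so all rotations of z have the same image t,
    and emb respects the defining relations. *)
Lemma zelt_central k g : gmul (zelt k) g = gmul g (zelt k).
Proof. by apply: fz_eq => /=; [rewrite red_cats0 ?(valP g.1) | lia]. Qed.

Lemma emb_rot k : emb (rot k z) = zgen.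
Proof.
have ez : gmul (emb (take k z)) (emb (drop k z)) = zgen.
  by rewrite -emb_cat cat_take_drop emb_z.
rewrite /rot emb_cat -(gmulKl (emb (take k z)) (emb (drop k z))) ez.
by rewrite -zelt_central -gmulA gmulV gmul1r.
Qed.

Lemma cong_emb u v : cong u v -> emb u = emb v.
Proof.
elim=> {u v} [u v k | u | u v _ IH | u v w _ IH1 _ IH2] //.
- by rewrite !(emb_cat u) (emb_cat (rot k z)) (emb_cat z) emb_rot emb_z.
- by rewrite IH1 IH2.
Qed.

Definition shift (k : Z) (t : seq T * Z) : seq T * Z := (t.1, (t.2 + k)%Z).

Definition letter_act (l : 'I_n' * bool) (t : seq T * Z) : seq T * Z :=
  if l.2 then nf_uncons (wid l.1) t else nf_cons (wid l.1) t.

Definition act (g : G) (t : seq T * Z) : seq T * Z :=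
  foldr letter_act (shift g.2 t) (val g.1).

Lemma letter_act_shift l k t : letter_act l (shift k t) = shift k (letter_act l t).
Proof.
by case: t => w j; rewrite /letter_act /shift; case: l.2 => /=; case: ifP => _ /=;
  congr pair; lia.
Qed.

Lemma shiftD a b t : shift (a + b) t = shift a (shift b t).
Proof. by case: t => w j; rewrite /shift /=; congr pair; lia. Qed.

Lemma fold_shift s k t : foldr letter_act (shift k t) s = shift k (foldr letter_act t s).
Proof. by elim: s => //= l s ->; rewrite letter_act_shift. Qed.

Lemma zfree_letter_act l t : zfree t.1 -> zfree (letter_act l t).1.
Proof.
by rewrite /letter_act; case: l.2; [apply: zfree_nf_uncons | apply: zfree_nf_cons].
Qed.

Lemma zfree_fold s t : zfree t.1 -> zfree (foldr letter_act t s).1.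
Proof. by elim: s => //= l s IH /IH; apply: zfree_letter_act. Qed.

Lemma letter_actK l t : zfree t.1 -> letter_act (letter_inv l) (letter_act l t) = t.
Proof.
case: l => i [] h; rewrite /letter_act /=.
  exact: nf_cons_uncons.
exact: nf_uncons_cons.
Qed.

Lemma fold_red_cat s r t : zfree t.1 ->
  foldr letter_act t (red_cat s r) = foldr letter_act (foldr letter_act t r) s.
Proof.
move=> ht; elim: s => //= l s <-; case: (red_cat s r) => [|y r'] //=.
case: ifPn => [/eqP -> | //] /=.
by rewrite -{1}(letter_invK l) letter_actK // zfree_fold.
Qed.

Lemma act_mul (g h : G) t : zfree t.1 -> act (gmul g h) t = act g (act h t).
Proof.
move=> ht; rewrite /act /= fold_red_cat; last exact: ht.
by rewrite shiftD fold_shift.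
Qed.

Lemma act_one t : act gone t = t.
Proof. by case: t => w j; rewrite /act /shift /=; congr pair; lia. Qed.

Lemma act_inv g t : zfree t.1 -> act (ginv g) (act g t) = t.
Proof. by move=> ht; rewrite -act_mul // gmulV act_one. Qed.

Lemma act_basis i t : act (basis i) t = nf_cons (wid i) t.
Proof. by case: t => w j; rewrite /act /shift /= Z.add_0_r. Qed.

Lemma act_basis_prod s t : zfree t.1 ->
  act (basis_prod s) t = foldr nf_cons t (map wid s).
Proof.
move=> ht; elim: s => [|i s IH]; first exact: act_one.
by rewrite /= act_mul -?IH ?act_basis // IH zfree_fold.
Qed.

(** Every letter acts as nf_cons; for a_n = (b_1 ... b_(n-1))^-1 t this is the
    statement that z acts by a shift (nf_fold_z). *)
Lemma act_letter_img x t : zfree t.1 -> act (letter_img x) t = nf_cons x t.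
Proof.
move=> ht; rewrite /letter_img; case: (unliftP ord_max x) => [i -> | ->].
  by rewrite act_basis; congr nf_cons; apply: ord_inj; rewrite lift_max.
set P := basis_prod _; rewrite act_mul //.
have -> : act zgen t = act P (nf_cons ord_max t).
  rewrite act_basis_prod ?zfree_nf_cons // -foldr_rcons -enum_ordSr.
  by case: t ht => w k /= hw; rewrite nf_fold_z.
by rewrite act_inv ?zfree_nf_cons.
Qed.

Lemma act_emb u t : zfree t.1 -> act (emb u) t = foldr nf_cons t u.
Proof.
move=> ht; elim: u => [|x u IH]; first exact: act_one.
by rewrite emb_cons act_mul ?act_letter_img ?IH // -IH zfree_fold.
Qed.

(** emb is injective modulo congruence: compare orbits of ([::], 0). *)
Lemma emb_inj u v : emb u = emb v -> cong u v.
Proof.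
move=> /(congr1 (act^~ ([::], 0%Z))); rewrite !act_emb // -/(nf u) -/(nf v).
have [w [k [-> _ cu]]] := nf_spec u; have [w' [k' [-> _ cv]]] := nf_spec v.
case=> ew /Nat2Z.inj ek; rewrite -ew -ek in cv.
exact: cong_trans cu (cong_sym cv).
Qed.

Lemma zelt_mul a b : gmul (zelt a) (zelt b) = zelt (a + b).
Proof. exact: fz_eq. Qed.

Lemma ginv_zelt k : ginv (zelt k) = zelt (- k).
Proof. exact: fz_eq. Qed.

Lemma gpow_zgen m : gpow zgen m = zelt (Z.of_nat m).
Proof.
elim: m => [|m IH] //; rewrite -[gpow zgen m.+1]/(gmul zgen (gpow zgen m)) IH.
by rewrite zelt_mul; congr zelt; lia.
Qed.

Lemma emb_zpow k : emb (zpow n' k) = zelt (Z.of_nat k).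
Proof.
elim: k => [|k IH] //; rewrite /zpow /= -/(zpow n' k) emb_cat emb_z IH zelt_mul.
congr zelt; lia.
Qed.

Lemma cyc_sub_zgen c : cyc_sub zgen c <-> exists k, c = zelt k.
Proof.
split=> [[m [-> | ->]] | [k ->]].
- by exists (Z.of_nat m); rewrite gpow_zgen.
- by exists (- Z.of_nat m)%Z; rewrite gpow_zgen ginv_zelt.
case: (Z.le_gt_cases 0 k) => hk.
  by exists (Z.to_nat k); left; rewrite gpow_zgen Z2Nat.id.
exists (Z.to_nat (- k)); right; rewrite gpow_zgen ginv_zelt Z2Nat.id; last lia.
by congr zelt; lia.
Qed.

Local Notation gensG := (fun i : 'I_n' => emb (gensF (n := n) i)).

Lemma emb_gensF i : emb (gensF (n := n) i) = basis i.
Proof.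
rewrite /gensF emb_cons emb_nil gmul1r -letter_img_wid; congr letter_img.
exact: ord_inj.
Qed.

Lemma geval_gens s :
  val (geval gensG s).1 = red_cat s [::] /\ (geval gensG s).2 = 0%Z.
Proof.
elim: s => [|[i b] s [IHv IHz]] //; rewrite geval_cons emb_gensF.
by case: b; rewrite /= IHv IHz.
Qed.

Lemma fz_decompose g : g = gmul (geval gensG (val g.1)) (zelt g.2).
Proof.
have [ev ez] := geval_gens (val g.1).
by apply: fz_eq; rewrite /= ?ev ?ez ?red_cats0 ?(valP g.1).
Qed.

Lemma F_free : free_of_rank (gen_sub gensG) n'.
Proof.
exists gensG; split; [|split] => // [i | s hs].
  by exists [:: (i, false)]; rewrite geval_cons gmul1r.
by move=> /(congr1 (fun g => val g.1)); have [-> _] := geval_gens s; rewrite red_cats0.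
Qed.

Lemma C_infinite m : 0 < m -> gpow zgen m <> gone.
Proof. by case: m => // m _; rewrite gpow_zgen => /(congr1 snd) /=; lia. Qed.

Lemma F_C_commute f c : cyc_sub zgen c -> gmul f c = gmul c f.
Proof. by case/cyc_sub_zgen => k ->; rewrite zelt_central. Qed.

Lemma F_meet_C g : gen_sub gensG g -> cyc_sub zgen g -> g = gone.
Proof.
move=> [s ->] /cyc_sub_zgen [k ek]; have [_ ez] := geval_gens s.
by move: ez; rewrite ek /= => ->.
Qed.

Lemma F_C_generate g :
  exists f c, [/\ gen_sub gensG f, cyc_sub zgen c & g = gmul f c].
Proof.
exists (geval gensG (val g.1)), (zelt g.2); split; last exact: fz_decompose.
  by eexists.
by apply/cyc_sub_zgen; eexists.
Qed.

(** Elements of the form emb u * t^-m form a submonoid containing the images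
    of the letters, their inverses and C; hence they exhaust G, i.e. G is the
    central localisation S_n <z>^-1. *)
Definition fraction (g : G) : Prop :=
  exists u m, g = gmul (emb u) (ginv (gpow zgen m)).

Lemma fractionE u m : fraction (gmul (emb u) (zelt (- Z.of_nat m))).
Proof. by exists u, m; rewrite gpow_zgen ginv_zelt. Qed.

Lemma fraction_emb u : fraction (emb u).
Proof. by have := fractionE u 0; rewrite gmul1r. Qed.

Lemma fraction_mul a b : fraction a -> fraction b -> fraction (gmul a b).
Proof.
move=> [u [m ->]] [v [m' ->]]; rewrite !gpow_zgen !ginv_zelt.
rewrite -gmulA (gmulA (zelt _)) zelt_central -!gmulA zelt_mul gmulA -emb_cat.
by have := fractionE (u ++ v) (m + m'); rewrite Nat2Z.inj_add Z.opp_add_distr.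
Qed.

Lemma fraction_zelt k : fraction (zelt k).
Proof.
case: (Z.le_gt_cases 0 k) => hk.
  by have := fraction_emb (zpow n' (Z.to_nat k)); rewrite emb_zpow Z2Nat.id.
have := fractionE [::] (Z.to_nat (- k)); rewrite emb_nil gmul1 Z2Nat.id; last lia.
by rewrite Z.opp_involutive.
Qed.

Lemma fraction_basis_inv i : fraction (ginv (basis i)).
Proof.
have := emb_rot (wid i); rewrite rotz_cons emb_cons letter_img_wid => eb.
have -> : ginv (basis i) = gmul (emb (rest (wid i))) (zelt (- Z.of_nat 1)).
  by rewrite -(gmulKl (basis i) (emb _)) eb -gmulA zelt_mul gmul1r.
exact: fractionE.
Qed.

Lemma fraction_all g : fraction g.
Proof.
rewrite (fz_decompose g); apply: fraction_mul (fraction_zelt _).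
elim: (val g.1) => [|[i b] s IH]; first exact: (fraction_emb [::]).
rewrite geval_cons emb_gensF; apply: fraction_mul IH.
case: b; first exact: fraction_basis_inv.
by have := fraction_emb [:: wid i]; rewrite emb_cons emb_nil gmul1r letter_img_wid.
Qed.

End Model.

Theorem theorem2p2 (n : nat) (hn : 3 <= n) :
  (* S_n is cancellative *)
  (forall u v w : seq 'I_n, cong (u ++ v) (u ++ w) -> cong v w) /\
  (forall u v w : seq 'I_n, cong (v ++ u) (w ++ u) -> cong v w) /\
  (* z = a_1 ... a_n is central in S_n *)
  (forall u : seq 'I_n, cong (zword n ++ u) (u ++ zword n)) /\
  (* group of fractions G = S_n <z>^{-1} *)
  exists (G : Grp) (iota : seq 'I_n -> G),
    iota [::] = gone /\
    (forall u v, iota (u ++ v) = gmul (iota u) (iota v)) /\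
    (forall u v, iota u = iota v <-> cong u v) /\
    (forall g : G, exists (u : seq 'I_n) (m : nat),
        g = gmul (iota u) (ginv (gpow (iota (zword n)) m))) /\
    (* F = gr(a_1,...,a_(n-1)) is free of rank n-1 *)
    free_of_rank (gen_sub (fun i => iota (gensF i))) n.-1 /\
    (* C = gr(z) is infinite cyclic *)
    (forall m : nat, 0 < m -> gpow (iota (zword n)) m <> gone) /\
    (* G = F x C (internal direct product) *)
    (forall f c : G, gen_sub (fun i => iota (gensF i)) f ->
        cyc_sub (iota (zword n)) c -> gmul f c = gmul c f) /\
    (forall g : G, gen_sub (fun i => iota (gensF i)) g ->
        cyc_sub (iota (zword n)) g -> g = gone) /\
    (forall g : G, exists f c : G, gen_sub (fun i => iota (gensF i)) f /\
        cyc_sub (iota (zword n)) c /\ g = gmul f c).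
Proof.
case: n hn => [//|n'] _.
split; [|split; [|split]].
- by move=> u v w /cong_emb; rewrite !emb_cat => /gmul_cancel_l /emb_inj.
- by move=> u v w /cong_emb; rewrite !emb_cat => /gmul_cancel_r /emb_inj.
- exact: cong_z_central.
exists (FZ 'I_n'), (@emb n'); rewrite emb_z.
split; first by [].
split; first exact: emb_cat.
split; first by move=> u v; split; [exact: emb_inj | exact: cong_emb].
split; first exact: fraction_all.
split; first exact: F_free.
split; first exact: C_infinite.
split; first by move=> f c _; apply: F_C_commute.
split; first exact: F_meet_C.
by move=> g; have [f [c [hf hc ->]]] := F_C_generate g; exists f, c.
Qed.
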